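(* Let $(X,\le)$ be a poset and $E$ an equivalence relation on $X$ with ${\le}\subseteq E$. If $\alpha:X\to X$ is an order automorphism of $(X,\le)$ with $\alpha\subseteq E$, then $\alpha\circ({\le}^c)^\smile=({\le}^c)^\smile\circ\alpha$, and this relation belongs to $\mathsf{Up}(\mathbf E)$.
   Context: For binary relations: converse $R^\smile=\{(x,y)\mid(y,x)\in R\}$; composition $R\circ S=\{(x,y)\mid\exists z\,((x,z)\in R,(z,y)\in S)\}$. A function $\alpha$ is identified with its graph $\{(x,\alpha(x))\}$. For a poset $(X,\le)$ and an equivalence relation $E\supseteq{\le}$ on $X$, $E$ is partially ordered by $(u,v)\preceq(x,y)$ iff $x\le u$ and $v\le y$; $\mathbf E=(E,\preceq)$ and $\mathsf{Up}(\mathbf E)$ is its set of up-sets. For $R\subseteq E$, $R^c=E\setminus R$. An order automorphism is a bijection $\alpha$ with $x\le y\iff\alpha(x)\le\alpha(y)$. *)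

Set Implicit Arguments.

Definition relation (X : Type) := X -> X -> Prop.

Definition conv {X : Type} (R : relation X) : relation X := fun x y => R y x.

Definition comp {X : Type} (R S : relation X) : relation X :=
  fun x y => exists z, R x z /\ S z y.

Definition graph {X : Type} (f : X -> X) : relation X := fun x y => y = f x.

Definition subrel {X : Type} (R S : relation X) : Prop := forall x y, R x y -> S x y.

Definition releq {X : Type} (R S : relation X) : Prop := forall x y, R x y <-> S x y.

Definition is_poset {X : Type} (le : relation X) : Prop :=
  (forall x, le x x) /\
  (forall x y, le x y -> le y x -> x = y) /\
  (forall x y z, le x y -> le y z -> le x z).

Definition is_equivalence {X : Type} (E : relation X) : Prop :=
  (forall x, E x x) /\
  (forall x y, E x y -> E y x) /\
  (forall x y z, E x y -> E y z -> E x z).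

(* R^c = E \ R *)
Definition relcompl {X : Type} (E R : relation X) : relation X :=
  fun x y => E x y /\ ~ R x y.

Definition Epreceq {X : Type} (le : relation X) (u v x y : X) : Prop :=
  le x u /\ le v y.

Definition in_Up {X : Type} (le E : relation X) (R : relation X) : Prop :=
  subrel R E /\
  (forall u v x y, R u v -> E x y -> Epreceq le u v x y -> R x y).

Definition bijective {X : Type} (f : X -> X) : Prop :=
  (forall x y, f x = f y -> x = y) /\ (forall y, exists x, f x = y).

Definition order_automorphism {X : Type} (le : relation X) (f : X -> X) : Prop :=
  bijective f /\ (forall x y, le x y <-> le (f x) (f y)).

(* An order automorphism alpha contained in E preserves and reflects both <= and E (since
   alpha x E x), hence also the converse complement N := (<=^c)^~; conjugating N by the
   bijection alpha is then exactly the commutation alpha o N = N o alpha.  The relation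
   alpha o N relates x to y iff N (alpha x) y, and N is an up-set of E by transitivity of
   <=; a monotone alpha inside E keeps that property. *)
From Stdlib Require Import RelationClasses Setoid.

Definition rel_invariant {X : Type} (f : X -> X) (R : relation X) : Prop :=
  forall x y, R (f x) (f y) <-> R x y.

Lemma comp_graph_l {X : Type} (f : X -> X) (R : relation X) (x y : X) :
  comp (graph f) R x y <-> R (f x) y.
Proof.
  split.
  - intros [z [-> Hz]]; exact Hz.
  - intros H; exists (f x); split; [reflexivity | exact H].
Qed.

Lemma graph_subrel_invariant {X : Type} (E : relation X) (f : X -> X) :
  Symmetric E -> Transitive E -> subrel (graph f) E -> rel_invariant f E.
Proof.
  intros HEs HEt HfE.
  assert (Hf : forall x, E x (f x)) by (intro x; apply HfE; reflexivity).
  intros x y; split; intros H.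
  - transitivity (f x); [apply Hf |].
    transitivity (f y); [exact H | symmetry; apply Hf].
  - transitivity x; [symmetry; apply Hf |].
    transitivity y; [exact H | apply Hf].
Qed.

Lemma relcompl_invariant {X : Type} (E R : relation X) (f : X -> X) :
  rel_invariant f E -> rel_invariant f R -> rel_invariant f (relcompl E R).
Proof.
  intros HE HR x y; unfold relcompl; rewrite (HE x y), (HR x y); reflexivity.
Qed.

Lemma conv_invariant {X : Type} (R : relation X) (f : X -> X) :
  rel_invariant f R -> rel_invariant f (conv R).
Proof. intros HR x y; apply HR. Qed.

Lemma comp_graph_commute {X : Type} (S : relation X) (f : X -> X) :
  (forall y, exists x, f x = y) -> rel_invariant f S ->
  releq (comp (graph f) S) (comp S (graph f)).
Proof.
  intros Hsur HS x y; rewrite comp_graph_l; split.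
  - intros H; destruct (Hsur y) as [w <-].
    exists w; split; [apply HS, H | reflexivity].
  - intros [z [Hz ->]]; apply HS, Hz.
Qed.

Lemma conv_relcompl_in_Up {X : Type} (le E : relation X) :
  Transitive le -> Symmetric E -> in_Up le E (conv (relcompl E le)).
Proof.
  intros Hlet HEs; split.
  - intros u v [Hvu _]; symmetry; exact Hvu.
  - intros u v x y [_ Hvu] Hxy [Hxu Hvy]; split.
    + symmetry; exact Hxy.
    + intros Hyx; apply Hvu.
      transitivity y; [exact Hvy |]; transitivity x; assumption.
Qed.

Lemma comp_graph_in_Up {X : Type} (le E R : relation X) (f : X -> X) :
  Symmetric E -> Transitive E -> subrel (graph f) E ->
  (forall x y, le x y -> le (f x) (f y)) ->
  in_Up le E R -> in_Up le E (comp (graph f) R).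
Proof.
  intros HEs HEt HfE Hmono [HRE HRup].
  assert (Hf : forall x, E x (f x)) by (intro x; apply HfE; reflexivity).
  split.
  - intros u v Huv; apply comp_graph_l in Huv.
    transitivity (f u); [apply Hf | apply HRE, Huv].
  - intros u v x y Huv Hxy [Hxu Hvy]; apply comp_graph_l in Huv; apply comp_graph_l.
    apply HRup with (f u) v; [exact Huv | | split; [apply Hmono, Hxu | exact Hvy]].
    transitivity x; [symmetry; apply Hf | exact Hxy].
Qed.

Theorem lemma3p9 (X : Type) (le E : relation X) (alpha : X -> X) :
  is_poset le ->
  is_equivalence E ->
  subrel le E ->
  order_automorphism le alpha ->
  subrel (graph alpha) E ->
  releq (comp (graph alpha) (conv (relcompl E le)))
        (comp (conv (relcompl E le)) (graph alpha)) /\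
  in_Up le E (comp (graph alpha) (conv (relcompl E le))).
Proof.
  intros [_ [_ Hlet]] [_ [HEs HEt]] _ [[_ Hsur] Hmono] HalphaE.
  assert (Hle : rel_invariant alpha le) by (intros x y; symmetry; apply Hmono).
  assert (HE : rel_invariant alpha E)
    by (apply graph_subrel_invariant; [exact HEs | exact HEt | exact HalphaE]).
  split.
  - apply comp_graph_commute; [exact Hsur |].
    apply conv_invariant, relcompl_invariant; assumption.
  - apply comp_graph_in_Up; [exact HEs | exact HEt | exact HalphaE | apply Hmono |].
    apply conv_relcompl_in_Up; [exact Hlet | exact HEs].
Qed.
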